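(* Let $N\ge1$, $M=2^N$, let $\mathcal{A}=\{a_0,\dots,a_{M-1}\}\subset\mathbb{C}$ be a constellation with any labelling, and let $S\subseteq\{0,\dots,N-1\}$. Let $\mathcal{M}'_S=\{i:\ b_l(i)=0\ \text{for all } l\in\{0,\dots,N-1\}\setminus S\}$. Suppose the points $\{a_i: i\in\mathcal{M}'_S\}$ form a family of rectangles (each with four of these points as vertices, together covering all of them) such that no two rectangles share a vertex, and in each rectangle the labels of one diagonal pair both contain an odd number of $0$s while the labels of the other diagonal pair both contain an even number of $0$s (in their $N$-bit binary representations). Then for all $y,h\in\mathbb{C}$, with $d_i=|y-ha_i|^2$, the coefficient $\bar d_S$ of the monomial $\prod_{n\in S}z_n$ in the associated pseudo-Boolean function $f$ is zero.
   Context: For $i\in\{0,\dots,M-1\}$ write its $N$-bit binary representation as $b_0(i)\cdots b_{N-1}(i)$ with $b_0$ the most significant bit; this is the label of $a_i$. Given $d_0,\dots,d_{M-1}$, define $f(z_0,\dots,z_{N-1})=\sum_{i}d_i\prod_{n=0}^{N-1}B_{i,n}(z_n)$, $z_n\in\{0,1\}$, with $B_{i,n}(z)=z$ if $b_n(i)=1$ and $1-z$ if $b_n(i)=0$. Its multilinear expansion is $f=\sum_{S}\bar d_S\prod_{n\in S}z_n$ with $\bar d_S=\sum_{i\in\mathcal{M}'_S}d_i\prod_{n\in S}(-1)^{1-b_n(i)}$. *)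

(* Complex numbers: an arbitrary numClosedFieldType C
   (this covers C = R[i] for R : realType, i.e. the complex numbers). *)
From HB Require Import structures.
From mathcomp Require Import all_boot all_order all_algebra.
Set Implicit Arguments. Unset Strict Implicit. Unset Printing Implicit Defensive.
Import Order.TTheory GRing.Theory Num.Theory.
Local Open Scope ring_scope.

(* b_n(i): bit n of the N-bit binary label of i, b_0 = most significant bit *)
Definition label_bit (N : nat) (i : nat) (n : 'I_N) : bool :=
  odd (i %/ 2 ^ (N.-1 - n)).

Definition nzeros (N : nat) (i : nat) : nat :=
  #|[set n : 'I_N | ~~ label_bit i n]|.

Definition Mprime (N : nat) (S : {set 'I_N}) : {set 'I_(2 ^ N)} :=
  [set i : 'I_(2 ^ N) | [forall l : 'I_N, (l \notin S) ==> ~~ label_bit i l]].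

Definition dbar (C : pzRingType) (N : nat) (d : 'I_(2 ^ N) -> C) (S : {set 'I_N}) : C :=
  \sum_(i in Mprime S) d i * \prod_(n in S) (-1) ^+ (1 - label_bit i n).

Definition perp (C : numClosedFieldType) (u v : C) : Prop := 'Re (u * v^*) = 0.

Definition is_rectangle (C : numClosedFieldType) (p0 p1 p2 p3 : C) : Prop :=
  uniq [:: p0; p1; p2; p3] /\
  perp (p1 - p0) (p3 - p0) /\ perp (p2 - p1) (p0 - p1) /\
  perp (p3 - p2) (p1 - p2) /\ perp (p0 - p3) (p2 - p3).

(* a rectangle given by four labels (indices), in cyclic order *)
Definition quad (M : nat) : Type := (('I_M * 'I_M) * ('I_M * 'I_M))%type.
Definition qverts (M : nat) (q : quad M) : seq 'I_M :=
  [:: q.1.1; q.1.2; q.2.1; q.2.2].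

Definition rect_family (C : numClosedFieldType) (N : nat) (a : 'I_(2 ^ N) -> C)
    (S : {set 'I_N}) (F : {set quad (2 ^ N)}) : Prop :=
  [/\ (forall q, q \in F -> {subset qverts q <= Mprime S}),
      (forall q, q \in F ->
         is_rectangle (a q.1.1) (a q.1.2) (a q.2.1) (a q.2.2)),
      (forall q, q \in F ->
         let: ((i0, i1), (i2, i3)) := q in
         (odd (nzeros N i0) && odd (nzeros N i2) &&
          ~~ odd (nzeros N i1) && ~~ odd (nzeros N i3)) \/
         (~~ odd (nzeros N i0) && ~~ odd (nzeros N i2) &&
          odd (nzeros N i1) && odd (nzeros N i3))),
      (forall i, i \in Mprime S -> exists2 q, q \in F & i \in qverts q)
    & (forall q q', q \in F -> q' \in F -> q != q' ->
         forall i, i \in qverts q -> i \notin qverts q')].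

(* Up to the global sign (-1)^|complement of S|, \bar d_S is the sum of
   d_i (-1)^(number of zeros of i) over M'_S.  Splitting M'_S into the
   rectangles, each rectangle contributes +-(d_i0 - d_i1 + d_i2 - d_i3), and this
   vanishes by the British flag theorem: the sums of squared distances from y to
   opposite corners of the rectangle with corners h a_i agree. *)

From HB Require Import structures.
From mathcomp Require Import all_boot all_order all_algebra.
From mathcomp Require Import ring.

Set Implicit Arguments. Unset Strict Implicit. Unset Printing Implicit Defensive.
Import Order.TTheory GRing.Theory Num.Theory.
Local Open Scope ring_scope.

Section Perpendicularity.
Variable C : numClosedFieldType.
Implicit Types u v w z : C.

Lemma perpE u v : perp u v <-> u * v^* + u^* * v = 0.
Proof.
rewrite /perp ReE rmorphM /= conjCK [u^* * v]mulrC.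
split=> [/eqP|->]; last by rewrite mul0r.
by rewrite mulf_eq0 invr_eq0 pnatr_eq0 orbF => /eqP.
Qed.

Lemma perp_sym u v : perp u v -> perp v u.
Proof. by rewrite !perpE => uv; rewrite -uv; ring. Qed.

Lemma perpN u v : perp u v -> perp u (- v).
Proof. by rewrite !perpE rmorphN => uv; rewrite -oppr0 -uv; ring. Qed.

Lemma perpMl z u v : perp u v -> perp (z * u) (z * v).
Proof.
rewrite !perpE !rmorphM => uv.
by rewrite -(mulr0 (z * z^*)) -uv; ring.
Qed.

Lemma perp_perp_conj u v w : u != 0 -> perp u v -> perp u w -> v * w^* = v^* * w.
Proof.
move=> u0 /perpE uv /perpE uw.
have uu0 : u * u^* != 0 by rewrite mulf_eq0 conjC_eq0 orbb.
apply: (mulIf uu0); apply/eqP; rewrite -subr_eq0; apply/eqP.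
transitivity ((u^* * v) * (u * w^* + u^* * w) - (u * v^* + u^* * v) * (u^* * w)).
  by ring.
by rewrite uv uw; ring.
Qed.

Lemma right_angles_parallel u v w :
  u != 0 -> w != 0 -> perp u v -> perp u w -> perp (v - u - w) w -> w = v.
Proof.
move=> u0 w0 uv uw /perpE; rewrite !rmorphB /= => vuw.
have vw_real := perp_perp_conj u0 uv uw.
move/perpE: uw => uw.
have : 2%:R * ((v - w) * w^*) = 0.
  transitivity ((v - u - w) * w^* + (v^* - u^* - w^*) * w
                + (v * w^* - v^* * w) + (u * w^* + u^* * w)); first by ring.
  by rewrite vuw vw_real uw subrr !addr0.
by move/eqP; rewrite !mulf_eq0 pnatr_eq0 conjC_eq0 (negbTE w0) orbF subr_eq0 => /eqP.
Qed.

Lemma rectangle_parallelogram (p0 p1 p2 p3 : C) :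
  is_rectangle p0 p1 p2 p3 -> p2 - p1 = p3 - p0.
Proof.
move=> [/= + [perp0 [perp1 [perp2 _]]]].
rewrite !inE !negb_or => /and4P[/and3P[p01 _ _] /andP[p12 _] _ _].
apply: (right_angles_parallel (u := p1 - p0)).
- by rewrite subr_eq0 eq_sym.
- by rewrite subr_eq0 eq_sym.
- exact: perp0.
- by apply: perp_sym; have := perpN perp1; rewrite opprB.
- have -> : p3 - p0 - (p1 - p0) - (p2 - p1) = p3 - p2 by ring.
  by have := perpN perp2; rewrite opprB.
Qed.

Lemma british_flag z p0 p1 p3 :
  perp (p1 - p0) (p3 - p0) ->
  `|z - p0| ^+ 2 + `|z - (p1 + p3 - p0)| ^+ 2 = `|z - p1| ^+ 2 + `|z - p3| ^+ 2.
Proof.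
move/perpE; rewrite !normCK !rmorphB ?rmorphD ?rmorphB /= => right0.
apply/eqP; rewrite -subr_eq0; apply/eqP.
by rewrite -right0; ring.
Qed.

Lemma rectangle_dist2 y h (a0 a1 a2 a3 : C) :
  is_rectangle a0 a1 a2 a3 ->
  `|y - h * a0| ^+ 2 + `|y - h * a2| ^+ 2 = `|y - h * a1| ^+ 2 + `|y - h * a3| ^+ 2.
Proof.
move=> rect; have /eqP := rectangle_parallelogram rect.
rewrite subr_eq => /eqP ->.
have -> : h * (a3 - a0 + a1) = h * a1 + h * a3 - h * a0 by ring.
apply: british_flag; rewrite -!mulrBr; apply: perpMl.
by case: rect => _ [].
Qed.

End Perpendicularity.

Lemma nzeros_Mprime N (S : {set 'I_N}) (i : 'I_(2 ^ N)) :
  i \in Mprime S -> nzeros N i = (\sum_(n in S) (1 - label_bit i n) + #|~: S|)%N.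
Proof.
rewrite inE => /forallP offS.
have -> : nzeros N i = (\sum_(n : 'I_N) (1 - label_bit i n))%N.
  rewrite /nzeros -sum1_card big_mkcond /=.
  by apply: eq_bigr => n _; rewrite inE; case: label_bit.
rewrite (bigID (mem S)) /= -sum1_card; congr addn.
apply: eq_big => [n|n]; first by rewrite inE.
by have := offS n => /implyP/[apply]/negbTE ->.
Qed.

Lemma sign_Mprime (R : pzRingType) N (S : {set 'I_N}) (i : 'I_(2 ^ N)) :
  i \in Mprime S ->
  \prod_(n in S) (-1) ^+ (1 - label_bit i n) =
    (-1) ^+ #|~: S| * (-1) ^+ nzeros N i :> R.
Proof.
move/nzeros_Mprime ->; rewrite prodrXr exprD mulrA -!exprD addnAC addnn exprD.
by rewrite -[(-1) ^+ _.*2]signr_odd odd_double mul1r.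
Qed.

Lemma dbarE (R : pzRingType) N (d : 'I_(2 ^ N) -> R) (S : {set 'I_N}) :
  dbar d S = (-1) ^+ #|~: S| * \sum_(i in Mprime S) d i * (-1) ^+ nzeros N i.
Proof.
rewrite /dbar mulr_sumr; apply: eq_bigr => i /sign_Mprime ->.
by rewrite mulrA [d i * _]commr_sign -mulrA.
Qed.

Lemma sum_partition_seqs (T I : finType) (R : nmodType) (A : {set T}) (F : {set I})
    (V : I -> seq T) (g : T -> R) :
  (forall q, q \in F -> uniq (V q)) ->
  (forall q, q \in F -> {subset V q <= A}) ->
  (forall i, i \in A -> exists2 q, q \in F & i \in V q) ->
  (forall q q', q \in F -> q' \in F -> q != q' -> forall i, i \in V q -> i \notin V q') ->
  \sum_(i in A) g i = \sum_(q in F) \sum_(i <- V q) g i.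
Proof.
move=> uniqV subA coverA disjV.
pose G q := if q \in F then [set i in V q] else set0.
have -> : A = \bigcup_q G q.
  apply/setP => i; apply/idP/bigcupP => [/coverA[q qF iq]|[q _]].
    by exists q; rewrite // /G qF inE.
  by rewrite /G; case: ifP => [qF|_]; rewrite inE // => /subA; apply.
rewrite partition_disjoint_bigcup => [|q q' qq']; last first.
  rewrite -setI_eq0 /G; case: ifP => qF; case: ifP => q'F; rewrite ?setI0 ?set0I //.
  apply/eqP/setP => i; rewrite !inE; apply/negbTE.
  by apply/nandP; case iq: (i \in V q); [right; apply: disjV iq | left].
rewrite [RHS]big_mkcond; apply: eq_bigr => q _; rewrite /G.
case: ifP => qF; last by rewrite big_set0.
by rewrite big_uniq ?uniqV //; apply: eq_bigl => i; rewrite inE.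
Qed.

Lemma signs_alternate (R : pzRingType) (n0 n1 n2 n3 : nat) :
  (odd n0 && odd n2 && ~~ odd n1 && ~~ odd n3) \/
  (~~ odd n0 && ~~ odd n2 && odd n1 && odd n3) ->
  [/\ (-1) ^+ n1 = - (-1) ^+ n0 :> R, (-1) ^+ n2 = (-1) ^+ n0 :> R
    & (-1) ^+ n3 = - (-1) ^+ n0 :> R].
Proof.
rewrite -(signr_odd _ n0) -(signr_odd _ n1) -(signr_odd _ n2) -(signr_odd _ n3) -!signrN.
by case: (odd n0) (odd n1) (odd n2) (odd n3) => [] [] [] [] [].
Qed.

Theorem corollary2 (C : numClosedFieldType) (N : nat) (hN : (1 <= N)%N)
    (a : 'I_(2 ^ N) -> C) (S : {set 'I_N}) (F : {set quad (2 ^ N)}) :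
  rect_family a S F ->
  forall y h : C, dbar (fun i => `|y - h * a i| ^+ 2) S = 0.
Proof.
move=> [inM rect par cover disj] y h.
have uniqV q : q \in F -> uniq (qverts q).
  by move=> qF; apply: (map_uniq (f := a)); case: (rect q qF).
rewrite dbarE (sum_partition_seqs _ uniqV inM cover disj) big1 ?mulr0 //.
move=> -[[i0 i1] [i2 i3]] qF.
rewrite !big_cons big_nil /=.
have [-> -> ->] := signs_alternate C (par _ qF).
set s := (-1) ^+ _.
transitivity ((`|y - h * a i0| ^+ 2 + `|y - h * a i2| ^+ 2
               - (`|y - h * a i1| ^+ 2 + `|y - h * a i3| ^+ 2)) * s); first by ring.
by rewrite (rectangle_dist2 y h (rect _ qF)) subrr mul0r.
Qed.
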